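(* Let $\mathcal H$ be a separable complex Hilbert space with canonical orthonormal basis $\{e_n\}$ and $S_2$ the Hilbert–Schmidt operators with $\langle\eta,\tau\rangle_2=\operatorname{tr}(\eta^*\tau)$. Let $A\in\mathcal B(S_2)$. For $n,m\in\mathbb N$, the formula $a_{nm}=\sum_{j,k}\langle\varepsilon_{nk},A\varepsilon_{mj}\rangle_2\,\varepsilon_{jk}$ (i.e. the operator with matrix entries $\langle e_j,a_{nm}e_k\rangle=\langle\varepsilon_{nk},A\varepsilon_{mj}\rangle_2$) defines an operator $a_{nm}\in\mathcal B(\mathcal H)$, and $$A\eta=\sum_{n,m}\varepsilon_{nm}\eta\, a_{nm}\qquad\text{for all }\eta\in S_2.$$
   Context: $\varepsilon_{nm}=|e_n\rangle\langle e_m|$, i.e. $\varepsilon_{nm}f=\langle e_m,f\rangle e_n$; these form an orthonormal basis of $S_2$. Inner products are anti-linear in the left argument. *)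

From HB Require Import structures.
From mathcomp Require Import all_boot all_order all_algebra.
From mathcomp Require Import complex.
From mathcomp Require Import all_classical all_reals all_analysis.

Set Implicit Arguments.
Unset Strict Implicit.
Unset Printing Implicit Defensive.

Import Order.TTheory GRing.Theory Num.Theory numFieldNormedType.Exports.
Local Open Scope ring_scope.
Local Open Scope complex_scope.

Notation rsum u := (limn (fun N => \sum_(0 <= k < N) u k)%R).

Section HS.
Variable R : realType.

(* The separable Hilbert space H = l^2(N; C) with canonical ebasis e_n.
   Vectors are sequences nat -> C; the l^2 condition is a predicate. *)
Definition vec := nat -> R[i].

Definition abs2 (z : R[i]) : R := complex.Re z ^+ 2 + complex.Im z ^+ 2.

Definition csum (u : nat -> R[i]) : R[i] :=
  (rsum (fun k => complex.Re (u k)) +i* rsum (fun k => complex.Im (u k))).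

Definition l2 (f : vec) : Prop :=
  (\sum_(0 <= k <oo) (abs2 (f k))%:E < +oo)%E.

Definition vnorm2 (f : vec) : R := rsum (fun k => abs2 (f k)).

Definition dotH (f g : vec) : R[i] := csum (fun k => (f k)^* * g k).

Definition ebasis (n : nat) : vec := fun k => if k == n then 1 else 0.

Definition op := vec -> vec.

Definition bounded_op (T : op) : Prop :=
  [/\ forall f, l2 f -> l2 (T f),
      forall (a : R[i]) f g, l2 f -> l2 g ->
        T (fun k => a * f k + g k) = (fun k => a * T f k + T g k)
    & exists M : R, forall f, l2 f -> vnorm2 (T f) <= M * vnorm2 f].

Definition hs (T : op) : Prop :=
  bounded_op T /\ (\sum_(0 <= k <oo) (vnorm2 (T (ebasis k)))%:E < +oo)%E.

Definition hs_norm2 (T : op) : R := rsum (fun k => vnorm2 (T (ebasis k))).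

(* <eta, tau>_2 = tr(eta^* tau) = sum_k <e_k, eta^* tau e_k>
               = sum_k <eta e_k, tau e_k> *)
Definition hs_dot (eta tau : op) : R[i] :=
  csum (fun k => dotH (eta (ebasis k)) (tau (ebasis k))).

(* equality of operators as elements of S_2 (agree on H) *)
Definition eqS2 (eta tau : op) : Prop := forall f, l2 f -> eta f = tau f.

Definition bounded_S2op (A : op -> op) : Prop :=
  [/\ forall eta, hs eta -> hs (A eta),
      forall eta tau, hs eta -> hs tau -> eqS2 eta tau -> eqS2 (A eta) (A tau),
      forall (a : R[i]) eta tau, hs eta -> hs tau ->
        eqS2 (A (fun f k => a * eta f k + tau f k))
             (fun f k => a * A eta f k + A tau f k)
    & exists M : R, forall eta, hs eta -> hs_norm2 (A eta) <= M * hs_norm2 eta].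

Definition eps (n m : nat) : op := fun f k => dotH (ebasis m) f * ebasis n k.

Definition opsub (S T : op) : op := fun f k => S f k - T f k.
Definition opsum (N : nat) (T : nat -> op) : op :=
  fun f k => \sum_(i < N) T i f k.

Definition hs_series_to (T : nat -> op) (S : op) : Prop :=
  ((fun N => hs_norm2 (opsub S (opsum N T))) @ \oo --> (0 : R))%classic.

End HS.

From HB Require Import structures.
From mathcomp Require Import all_boot all_order all_algebra.
From mathcomp Require Import complex.
From mathcomp Require Import all_classical all_reals all_analysis.
From mathcomp Require Import ring lra.
Import Order.TTheory GRing.Theory Num.Theory numFieldNormedType.Exports.

(* The operator a_{nm} is read off the action of A on the matrix units:
   <e_j, a_{nm} e_k> = <e_n, A(eps_{mj}) e_k>.  Testing A on finite
   combinations sum_j c_j eps_{mj} and using Cauchy-Schwarz shows that each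
   a_{nm} is bounded.  Approximating the row eps_{mm} eta of eta by the finite
   rank operators sum_{j<J} <e_m, eta e_j> eps_{mj} gives
   <e_m, eta a_{nm} e_k> = <e_n, A(eps_{mm} eta) e_k>, so the partial sums over
   m < N of eps_{nm} eta a_{nm} equal eps_{nn} A(eta - R_N), where R_N is eta
   with its first N rows deleted.  Since A is bounded on S_2 and
   ||R_N||_2 -> 0, these sums converge to eps_{nn} A eta, and A eta is the
   Hilbert-Schmidt sum of its rows eps_{nn} A eta. *)
Set Implicit Arguments.
Unset Strict Implicit.
Unset Printing Implicit Defensive.
Local Open Scope ring_scope.
Local Open Scope classical_set_scope.

Section limits_to_zero.
Context {R : realFieldType}.
Implicit Types x y : R ^nat.

Lemma cvg0_squeeze x y :
  (forall n, 0 <= x n <= y n) -> y @ \oo --> 0 -> x @ \oo --> 0.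
Proof. by move=> xy; apply: (squeeze_cvgr _ (cvg_cst 0)); apply: nearW. Qed.

Lemma le_of_cvg0 (a c : R) x :
  (forall n, c <= a + x n) -> x @ \oo --> 0 -> c <= a.
Proof.
move=> cx x0; have ax : a + x n @[n --> \oo] --> a.
  by rewrite -[X in _ --> X]addr0; apply: cvgD => //; exact: cvg_cst.
by rewrite -(cvg_lim _ ax) //; apply: limr_ge; [exact: cvgP ax | exact: nearW].
Qed.

Lemma ler_pM_max0 (M x y : R) : 0 <= y -> x <= M * y -> x <= Num.max M 0 * y.
Proof. by move=> y_ge0 /le_trans; apply; rewrite ler_wpM2r // le_max lexx. Qed.

End limits_to_zero.

Definition series_finite {R : realType} (u : R ^nat) :=
  (\sum_(0 <= k <oo) (u k)%:E < +oo)%E.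

Definition tailn {V : zmodType} (N : nat) (u : nat -> V) : nat -> V :=
  fun k => if (k < N)%N then 0 else u k.

Section finitely_supported_series.
Variable R : realType.
Variables (u : R ^nat) (K : nat).
Hypothesis u_support : forall k, (K <= k)%N -> u k = 0.

Lemma series_support L : (K <= L)%N -> series u L = series u K.
Proof.
move=> KL; rewrite /series /= (big_cat_nat (leq0n K) KL) /= -[RHS]addr0; congr (_ + _).
by rewrite big_nat_cond big1 // => i /andP[/andP[Ki _] _]; exact: u_support.
Qed.

Lemma rsum_support : rsum u = series u K.
Proof.
by apply: lim_near_cst => //; near=> L; apply: series_support; near: L; exists K.
Unshelve. all: by end_near.
Qed.

End finitely_supported_series.

Section nonnegative_series.
Variable R : realType.
Variable u : R ^nat.
Hypothesis u_ge0 : forall k, 0 <= u k.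

Lemma series_ge0 N : 0 <= series u N.
Proof. exact: sumr_ge0. Qed.

Lemma nondecreasing_series_ge0 : nondecreasing_seq (series u).
Proof. exact: nondecreasing_series. Qed.

Lemma series_finite_cvg : series_finite u -> cvgn (series u).
Proof. exact: nnseries_is_cvg. Qed.

Lemma series_le_rsum N : series_finite u -> series u N <= rsum u.
Proof.
by move=> fu; exact: (nondecreasing_cvgn_le nondecreasing_series_ge0 (series_finite_cvg fu)).
Qed.

Lemma rsum_ge0 : series_finite u -> 0 <= rsum u.
Proof. by move=> fu; apply: le_trans (series_le_rsum 0 fu); rewrite /series /= big_geq. Qed.

Lemma le_rsum k : series_finite u -> u k <= rsum u.
Proof.
move=> fu; apply: le_trans (series_le_rsum k.+1 fu).
by rewrite seriesSr lerDr series_ge0.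
Qed.

Lemma series_finite_bounded B :
  (forall N, series u N <= B) -> series_finite u /\ rsum u <= B.
Proof.
move=> uB; have cu : cvgn (series u).
  by apply: nondecreasing_is_cvgn nondecreasing_series_ge0 _; exists B => _ [n _ <-].
split; last by apply: limr_le => //; exact: nearW.
rewrite /series_finite (_ : (\sum_(0 <= k <oo) (u k)%:E)%E = limn (EFin \o series u)).
  by rewrite EFin_lim // ltry.
by congr (limn _); apply: funext => N; rewrite /= sumEFin.
Qed.

Lemma series_finite_support K :
  (forall k, (K <= k)%N -> u k = 0) -> series_finite u.
Proof.
move=> uK; suff le_K N : series u N <= series u K by exact: (series_finite_bounded le_K).1.
by case: (leqP K N) => [/(series_support uK) -> // | /ltnW]; exact: nondecreasing_series_ge0.
Qed.

End nonnegative_series.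

Section nonnegative_series_tail.
Variable R : realType.
Variable u : R ^nat.
Hypothesis u_ge0 : forall k, 0 <= u k.

Lemma series_tailn N L : (N <= L)%N -> series (tailn N u) L = series u L - series u N.
Proof.
move=> NL; rewrite /series /= !(big_cat_nat (leq0n N) NL) /=.
rewrite [X in X + _]big_nat_cond big1 ?add0r; last first.
  by move=> i /andP[/andP[_ iN] _]; rewrite /tailn iN.
rewrite addrC addrK; apply: eq_big_nat => i /andP[Ni _].
by rewrite /tailn ltnNge Ni.
Qed.

Lemma tailn_ge0 N k : 0 <= tailn N u k.
Proof. by rewrite /tailn; case: ifP. Qed.

Lemma series_finite_tailn N : series_finite u ->
  series_finite (tailn N u) /\ rsum (tailn N u) <= rsum u - series u N.
Proof.
move=> fu; apply: series_finite_bounded => [k|L]; first exact: tailn_ge0.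
case: (leqP N L) => NL.
  by rewrite series_tailn // lerD2r; exact: series_le_rsum u_ge0 L fu.
rewrite /series /= big_nat_cond big1 ?subr_ge0; first exact: series_le_rsum u_ge0 N fu.
by move=> i /andP[/andP[_ iL] _]; rewrite /tailn (ltn_trans iL NL).
Qed.

Lemma rsum_tailn_cvg0 : series_finite u -> rsum (tailn N u) @[N --> \oo] --> 0.
Proof.
move=> fu; apply: (@cvg0_squeeze _ (fun N => rsum (tailn N u)) (fun N => rsum u - series u N)).
  move=> N; have [ft ->] := series_finite_tailn N fu.
  by rewrite andbT; exact: rsum_ge0 (tailn_ge0 N) ft.
have cs : series u @ \oo --> rsum u := series_finite_cvg u_ge0 fu.
by rewrite -[X in _ --> X](subrr (rsum u)); apply: cvgB (cvg_cst _) cs.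
Qed.

End nonnegative_series_tail.

Lemma rsum_cvg0_dominated (R : realType) (x : nat -> R ^nat) (g : R ^nat) :
  (forall N k, 0 <= x N k <= g k) -> series_finite g ->
  (forall k, x N k @[N --> \oo] --> 0) -> rsum (x N) @[N --> \oo] --> 0.
Proof.
move=> xg fg x0.
have x_ge0 N k : 0 <= x N k by case/andP: (xg N k).
have g_ge0 k : 0 <= g k by case/andP: (xg 0%N k); exact: le_trans.
apply/cvgrPdist_le => e e0; have e2 : 0 < e / 2 by rewrite divr_gt0.
have /cvgrPdist_le /(_ _ e2) [K _ /(_ K (leqnn K)) gK] := rsum_tailn_cvg0 g_ge0 fg.
have xK : series (x N) K @[N --> \oo] --> 0.
  have := @cvg_big _ _ +%R 0 xpredT add_continuous _ \oo (index_iota 0 K)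
    (fun k N => x N k) (fun=> 0) _ (fun k _ => x0 k).
  by rewrite big1_eq; apply; typeclasses eauto.
have [fgK _] := series_finite_tailn g_ge0 K fg.
have xN_le N L : series (x N) L <= series (x N) K + rsum (tailn K g).
  apply: le_trans (nondecreasing_series_ge0 (x_ge0 N) (leq_maxr K L)) _.
  rewrite /series /= (big_cat_nat (leq0n K) (leq_maxl K L)) /= lerD2l.
  apply: le_trans (series_le_rsum (tailn_ge0 g_ge0 K) (maxn K L) fgK).
  rewrite series_tailn ?leq_maxl // /series /= (big_cat_nat (leq0n K) (leq_maxl K L)) /=.
  by rewrite addrC addrK; apply: ler_sum => k _; case/andP: (xg N k).
near=> N; have [fxN xN_rsum] := series_finite_bounded (x_ge0 N) (xN_le N).
rewrite sub0r normrN ger0_norm; last exact: rsum_ge0 (x_ge0 N) fxN.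
apply: le_trans xN_rsum _; rewrite [e]splitr; apply: lerD.
  near: N; move/cvgrPdist_le: xK => /(_ _ e2); apply: filterS => N.
  by rewrite sub0r normrN; exact: le_trans (ler_norm _).
by move: gK; rewrite sub0r normrN; exact: le_trans (ler_norm _).
Unshelve. all: by end_near.
Qed.

Lemma cauchy_schwarz_real (R : realFieldType) (x y : nat -> R) N :
  (\sum_(i < N) x i * y i) ^+ 2 <= (\sum_(i < N) x i ^+ 2) * (\sum_(i < N) y i ^+ 2).
Proof.
elim: N => [|N IH]; first by rewrite !big_ord0 expr0n mul0r.
rewrite !big_ord_recr /=.
set S := \sum_(i < N) _ in IH *; set A := \sum_(i < N) _ in IH *.
set B := \sum_(i < N) _ in IH *; set a := x N; set b := y N.
have A0 : 0 <= A by apply: sumr_ge0 => i _; exact: sqr_ge0.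
have B0 : 0 <= B by apply: sumr_ge0 => i _; exact: sqr_ge0.
suff : 2 * S * a * b <= A * b ^+ 2 + B * a ^+ 2 by nra.
have AB0 : 0 <= A * b ^+ 2 + B * a ^+ 2 by rewrite addr_ge0 // mulr_ge0 // sqr_ge0.
have sqr_le : (2 * S * a * b) ^+ 2 <= (A * b ^+ 2 + B * a ^+ 2) ^+ 2.
  have := ler_wpM2r (sqr_ge0 (a * b)) IH; have := sqr_ge0 (A * b ^+ 2 - B * a ^+ 2).
  nra.
have [Sab_le0|Sab_gt0] := lerP (2 * S * a * b) 0; first exact: le_trans AB0.
by rewrite -(ler_pXn2r (n := 2)) // nnegrE ltW.
Qed.

Section complex_modulus.
Variable R : realType.
Local Open Scope complex_scope.
Implicit Types z w : R[i].

Lemma abs2_ge0 z : 0 <= abs2 z.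
Proof. by rewrite addr_ge0 // sqr_ge0. Qed.

Lemma abs20 : abs2 (0 : R[i]) = 0.
Proof. by rewrite /abs2 /= expr0n /= addr0. Qed.

Lemma abs2_le0 z : abs2 z <= 0 -> z = 0.
Proof.
case: z => a b; rewrite /abs2 /= => ab0.
have a0 : a ^+ 2 = 0 by apply/eqP; rewrite eq_le sqr_ge0 andbT; nra.
have b0 : b ^+ 2 = 0 by apply/eqP; rewrite eq_le sqr_ge0 andbT; nra.
by move: a0 b0 => /eqP; rewrite sqrf_eq0 => /eqP -> /eqP; rewrite sqrf_eq0 => /eqP ->.
Qed.

Lemma abs2M z w : abs2 (z * w) = abs2 z * abs2 w.
Proof. by case: z => a b; case: w => c d; rewrite /abs2 /=; ring. Qed.

Lemma abs2N z : abs2 (- z) = abs2 z.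
Proof. by case: z => a b; rewrite /abs2 /= !sqrrN. Qed.

Lemma abs2J z : abs2 z^* = abs2 z.
Proof. by case: z => a b; rewrite /abs2 /= sqrrN. Qed.

Lemma abs2_real (x : R) : abs2 x%:C = x ^+ 2.
Proof. by rewrite /abs2 /= expr0n /= addr0. Qed.

Lemma mulJ_abs2 z : z^* * z = (abs2 z)%:C.
Proof.
case: z => a b; apply/eqP; rewrite eq_complex /= /abs2 /=.
by apply/andP; split; apply/eqP; ring.
Qed.

Lemma abs2D_le z w : abs2 (z + w) <= 2 * abs2 z + 2 * abs2 w.
Proof.
case: z => a b; case: w => c d; rewrite /abs2 /=.
by have := sqr_ge0 (a - c); have := sqr_ge0 (b - d); nra.
Qed.

Lemma abs2E z : abs2 z = Normc.normc z ^+ 2.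
Proof. by case: z => a b; rewrite /= sqr_sqrtr // addr_ge0 ?sqr_ge0. Qed.

Lemma cauchy_schwarz (a b : nat -> R[i]) N :
  abs2 (\sum_(i < N) a i * b i)
    <= (\sum_(i < N) abs2 (a i)) * (\sum_(i < N) abs2 (b i)).
Proof.
have normc_ge0 z : 0 <= Normc.normc z by case: z => ? ?; exact: sqrtr_ge0.
have triangle : Normc.normc (\sum_(i < N) a i * b i)
                <= \sum_(i < N) Normc.normc (a i) * Normc.normc (b i).
  elim: N => [|N IH]; first by rewrite !big_ord0 Normc.normc0.
  rewrite !big_ord_recr /= -Normc.normcM.
  by apply: le_trans (le_normcD _ _) _; rewrite lerD2r.
rewrite abs2E (eq_bigr (fun i : 'I_N => Normc.normc (a i) ^+ 2)) => [|i _]; last exact: abs2E.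
rewrite [X in _ * X](eq_bigr (fun i : 'I_N => Normc.normc (b i) ^+ 2)) => [|i _]; last exact: abs2E.
have := cauchy_schwarz_real (fun i => Normc.normc (a i)) (fun i => Normc.normc (b i)) N.
apply: le_trans; rewrite lerXn2r ?nnegrE ?normc_ge0 //.
by apply: sumr_ge0 => i _; rewrite mulr_ge0 ?normc_ge0.
Qed.

End complex_modulus.

Lemma abs2_lim_unique (R : realType) (z w : R[i]) (s : nat -> R[i]) :
  abs2 (z - s N) @[N --> \oo] --> 0 -> abs2 (w - s N) @[N --> \oo] --> 0 -> z = w.
Proof.
move=> zs ws; apply/eqP; rewrite -subr_eq0; apply/eqP/abs2_le0.
have zws : 2 * abs2 (z - s N) + 2 * abs2 (w - s N) @[N --> \oo] --> 0.
  by rewrite -[X in _ --> X](addr0 0) -[X in _ --> X + _](mulr0 2) -[X in _ --> _ + X](mulr0 2);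
    apply: cvgD; apply: cvgMl_tmp.
apply: le_of_cvg0 zws => N; rewrite add0r -(abs2N (w - s N)).
by rewrite (_ : z - w = (z - s N) + - (w - s N)) ?abs2D_le // opprB addrA subrK.
Qed.

Section canonical_basis.
Variable R : realType.
Local Notation e := (ebasis R).
Local Open Scope complex_scope.
Implicit Types (f : vec R) (c : R[i]).

Lemma ebasisC n k : e n k = e k n.
Proof. by rewrite /ebasis eq_sym. Qed.

Lemma sum_scale_ebasis (c : nat -> R[i]) N k :
  \sum_(i < N) c i * e i k = if (k < N)%N then c k else 0.
Proof.
case: ifP => kN; last first.
  by rewrite big1 // => i _; rewrite /ebasis ifN ?mulr0 //; apply: contraFN kN => /eqP ->.
rewrite (bigD1 (Ordinal kN)) //= /ebasis eqxx mulr1 big1 ?addr0 // => i ik.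
by rewrite ifN ?mulr0 //; apply: contra ik => /eqP ki; apply/eqP/val_inj.
Qed.

Lemma abs2_scale_ebasis c n k : abs2 (c * e n k) = if k == n then abs2 c else 0.
Proof. by rewrite /ebasis; case: ifP => _; rewrite ?mulr1 ?mulr0 ?abs20. Qed.

Lemma csum_single (u : nat -> R[i]) m : (forall k, k != m -> u k = 0) -> csum u = u m.
Proof.
move=> um; rewrite /csum.
have single (F : R[i] -> R) : F 0 = 0 -> rsum (fun k => F (u k)) = F (u m).
  move=> F0; have Fum k : (m.+1 <= k)%N -> F (u k) = 0.
    by move=> mk; rewrite um ?F0 // neq_ltn mk orbT.
  rewrite (rsum_support Fum).
  rewrite /series /= big_nat_recr //= big_nat_cond big1 ?add0r // => i /andP[/andP[_ im] _].
  by rewrite um ?F0 // ltn_eqF.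
by rewrite (single (fun z => complex.Re z)) // (single (fun z => complex.Im z)) //; case: (u m).
Qed.

Lemma dotH_scale_ebasis c n f : dotH (fun k => c * e n k) f = c^* * f n.
Proof.
rewrite /dotH (@csum_single _ n) => [|k kn]; first by rewrite /ebasis eqxx mulr1.
by rewrite /ebasis (negbTE kn) mulr0 conjC0 mul0r.
Qed.

Lemma dotH_ebasis n f : dotH (e n) f = f n.
Proof.
have -> : e n = (fun k => 1 * e n k) by apply: funext => k; rewrite mul1r.
by rewrite dotH_scale_ebasis conjC1 mul1r.
Qed.

Lemma epsE n m f : eps n m f = (fun k => f m * e n k).
Proof. by apply: funext => k; rewrite /eps dotH_ebasis. Qed.

End canonical_basis.

Section square_summable.
Variable R : realType.
Local Notation e := (ebasis R).
Implicit Types (f g : vec R) (c : R[i]).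

Lemma l2_bounded f B :
  (forall N, series (fun k => abs2 (f k)) N <= B) -> l2 f /\ vnorm2 f <= B.
Proof. exact: (series_finite_bounded (fun k => abs2_ge0 (f k))). Qed.

Lemma vnorm2_ge0 f : l2 f -> 0 <= vnorm2 f.
Proof. exact: (rsum_ge0 (fun k => abs2_ge0 (f k))). Qed.

Lemma series_le_vnorm2 f N : l2 f -> series (fun k => abs2 (f k)) N <= vnorm2 f.
Proof. exact: (series_le_rsum (fun k => abs2_ge0 (f k))). Qed.

Lemma abs2_le_vnorm2 f k : l2 f -> abs2 (f k) <= vnorm2 f.
Proof. exact: (le_rsum (fun k => abs2_ge0 (f k))). Qed.

Lemma l2_lincomb c f g : l2 f -> l2 g ->
  l2 (fun k => c * f k + g k) /\
  vnorm2 (fun k => c * f k + g k) <= 2 * abs2 c * vnorm2 f + 2 * vnorm2 g.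
Proof.
move=> lf lg; apply: l2_bounded => N.
apply: le_trans (_ : \sum_(0 <= k < N) (2 * abs2 c * abs2 (f k) + 2 * abs2 (g k)) <= _).
  by apply: ler_sum => k _; apply: le_trans (abs2D_le _ _) _; rewrite abs2M mulrA.
rewrite big_split /= -!mulr_sumr lerD ?ler_wpM2l ?mulr_ge0 ?abs2_ge0 //.
  exact: series_le_vnorm2.
exact: series_le_vnorm2.
Qed.

Lemma l2_scale_ebasis c n :
  l2 (fun k => c * e n k) /\ vnorm2 (fun k => c * e n k) = abs2 c.
Proof.
have supp k : (n.+1 <= k)%N -> abs2 (c * e n k) = 0.
  by move=> nk; rewrite abs2_scale_ebasis ifN // neq_ltn nk orbT.
split.
  exact: (@series_finite_support _ (fun k => abs2 (c * e n k)) (fun k => abs2_ge0 _) _ supp).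
rewrite /vnorm2 (rsum_support supp) /series /= big_nat_recr //= abs2_scale_ebasis eqxx.
rewrite big_nat_cond big1 ?add0r // => i /andP[/andP[_ ni] _].
by rewrite abs2_scale_ebasis ifN // ltn_eqF.
Qed.

Lemma l2_ebasis n : l2 (e n).
Proof.
have := (l2_scale_ebasis 1 n).1.
by congr l2; apply: funext => k; rewrite mul1r.
Qed.

Lemma l2_0 : l2 (fun=> 0 : R[i]).
Proof.
have -> : (fun=> 0 : R[i]) = (fun k => 0 * e 0 k) by apply: funext => k; rewrite mul0r.
exact: (l2_scale_ebasis 0 0).1.
Qed.

Lemma l2_finsum (c : nat -> R[i]) (F : nat -> vec R) N : (forall i, l2 (F i)) ->
  l2 (fun k => \sum_(i < N) c i * F i k).
Proof.
move=> lF; elim: N => [|N IH].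
  have -> : (fun k => \sum_(i < 0) c i * F i k) = fun=> 0.
    by apply: funext => k; rewrite big_ord0.
  exact: l2_0.
have -> : (fun k => \sum_(i < N.+1) c i * F i k)
          = (fun k => c N * F N k + \sum_(i < N) c i * F i k).
  by apply: funext => k; rewrite big_ord_recr /= addrC.
exact: (l2_lincomb (c N) (lF N) IH).1.
Qed.

Lemma l2_tailn N f : l2 f -> l2 (tailn N f) /\ vnorm2 (tailn N f) <= vnorm2 f.
Proof.
move=> lf; apply: l2_bounded => L; apply: le_trans (series_le_vnorm2 L lf).
by apply: ler_sum => k _; rewrite /tailn; case: ifP => _; rewrite ?abs20 ?abs2_ge0.
Qed.

Lemma vnorm2_tailn_cvg0 f : l2 f -> vnorm2 (tailn N f) @[N --> \oo] --> 0.
Proof.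
move=> lf; have -> : (fun N => vnorm2 (tailn N f))
                      = (fun N => rsum (tailn N (fun k => abs2 (f k)))).
  apply/funext => N; congr (limn _); apply/funext => L.
  by apply: eq_bigr => k _; rewrite /tailn; case: ifP; rewrite ?abs20.
exact: (rsum_tailn_cvg0 (fun k => abs2_ge0 (f k))).
Qed.

End square_summable.

Section bounded_operators.
Variable R : realType.
Local Notation e := (ebasis R).
Implicit Types (f : vec R) (T : op R).

Lemma bounded_op_norm T : bounded_op T ->
  exists2 M, 0 <= M & forall f, l2 f -> vnorm2 (T f) <= M * vnorm2 f.
Proof.
case=> _ _ [M TM]; exists (Num.max M 0) => [|f lf]; first by rewrite le_max lexx orbT.
exact: ler_pM_max0 (vnorm2_ge0 lf) (TM f lf).
Qed.

Lemma bounded_op0 T : bounded_op T -> T (fun=> 0) = (fun=> 0).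
Proof.
case=> _ T_lin _; have := T_lin 1 _ _ (l2_0 R) (l2_0 R).
rewrite (_ : (fun k => 1 * 0 + 0) = fun=> 0); last by apply: funext => k; rewrite mul1r addr0.
move=> T0; apply: funext => k; have := congr1 (fun g => g k) T0; rewrite /= mul1r.
by rewrite -{1}[T _ k]addr0 => /addrI <-.
Qed.

Lemma bounded_op_finsum T (c : nat -> R[i]) (F : nat -> vec R) N :
  bounded_op T -> (forall i, l2 (F i)) ->
  T (fun k => \sum_(i < N) c i * F i k) = (fun k => \sum_(i < N) c i * T (F i) k).
Proof.
move=> bT lF; elim: N => [|N IH].
  rewrite (_ : (fun k => _) = fun=> 0); last by apply: funext => k; rewrite big_ord0.
  by rewrite bounded_op0 //; apply: funext => k; rewrite big_ord0.
have -> : (fun k => \sum_(i < N.+1) c i * F i k)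
          = (fun k => c N * F N k + \sum_(i < N) c i * F i k).
  by apply: funext => k; rewrite big_ord_recr /= addrC.
case: bT => _ T_lin _; rewrite (T_lin _ _ _ (lF N) (l2_finsum _ _ lF)) IH.
by apply: funext => k; rewrite big_ord_recr /= addrC.
Qed.

(* The error is the [n]-th coordinate of [T (tailn N f)]. *)
Lemma bounded_op_expansion T f n : bounded_op T -> l2 f ->
  abs2 (T f n - \sum_(k < N) f k * T (e k) n) @[N --> \oo] --> 0.
Proof.
move=> bT lf; have [M M_ge0 TM] := bounded_op_norm bT.
apply: (@cvg0_squeeze _ _ (fun N => M * vnorm2 (tailn N f))); last first.
  by rewrite -[X in _ --> X](mulr0 M); apply: cvgMl_tmp; exact: vnorm2_tailn_cvg0.
move=> N; rewrite abs2_ge0 /=.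
have [lt _] := l2_tailn N lf.
have split_f : f = (fun k => 1 * (\sum_(i < N) f i * e i k) + tailn N f k).
  by apply: funext => k; rewrite mul1r sum_scale_ebasis /tailn; case: ifP; rewrite ?addr0 ?add0r.
have lP : l2 (fun k => \sum_(i < N) f i * e i k) by apply: l2_finsum => i; exact: l2_ebasis.
case: (bT) => T_l2 T_lin _.
rewrite {1}split_f T_lin // bounded_op_finsum // => [|i]; last exact: l2_ebasis.
rewrite mul1r addrAC subrr add0r.
by apply: le_trans (abs2_le_vnorm2 _ (T_l2 _ lt)) _; exact: TM.
Qed.

End bounded_operators.

Section hilbert_schmidt.
Variable R : realType.
Local Notation e := (ebasis R).
Implicit Types (f : vec R) (X Y : op R).

Lemma hs_bounded_op X : hs X -> bounded_op X.
Proof. by case. Qed.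

Lemma hs_l2_col X k : hs X -> l2 (X (e k)).
Proof. by case=> -[X_l2 _ _] _; apply: X_l2; exact: l2_ebasis. Qed.

Lemma hs_norm2_ge0 X : hs X -> 0 <= hs_norm2 X.
Proof.
move=> hX; apply: (rsum_ge0 (fun k => vnorm2_ge0 (hs_l2_col k hX))); exact: hX.2.
Qed.

Lemma series_le_hs_norm2 X N : hs X ->
  series (fun k => vnorm2 (X (e k))) N <= hs_norm2 X.
Proof.
move=> hX; apply: (series_le_rsum (fun k => vnorm2_ge0 (hs_l2_col k hX))); exact: hX.2.
Qed.

Lemma vnorm2_col_le_hs_norm2 X k : hs X -> vnorm2 (X (e k)) <= hs_norm2 X.
Proof.
move=> hX; apply: (le_rsum (fun k => vnorm2_ge0 (hs_l2_col k hX))); exact: hX.2.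
Qed.

Lemma abs2_entry_le_hs_norm2 X k i : hs X -> abs2 (X (e k) i) <= hs_norm2 X.
Proof.
move=> hX; apply: le_trans (vnorm2_col_le_hs_norm2 k hX).
exact: abs2_le_vnorm2 (hs_l2_col k hX).
Qed.

Lemma hs_bounded X B : bounded_op X ->
  (forall N, series (fun k => vnorm2 (X (e k))) N <= B) -> hs X /\ hs_norm2 X <= B.
Proof.
move=> bX XB; have col_ge0 k : 0 <= vnorm2 (X (e k)).
  by case: bX => X_l2 _ _; apply/vnorm2_ge0/X_l2/l2_ebasis.
by have [] := series_finite_bounded col_ge0 XB.
Qed.

Lemma eq_hs_norm2 X Y : (forall k, X (e k) = Y (e k)) -> hs_norm2 X = hs_norm2 Y.
Proof. by move=> XY; congr (limn _); apply/funext => N; apply: eq_bigr => k _; rewrite XY. Qed.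

(* The factor [2] comes from comparing [X f n] with the finite sums of
   [bounded_op_expansion]. *)
Lemma abs2_hs_apply_le X f n : hs X -> l2 f ->
  abs2 (X f n) <= 2 * (hs_norm2 X * vnorm2 f).
Proof.
move=> hX lf; have exp_f := bounded_op_expansion n (hs_bounded_op hX) lf.
apply: (le_of_cvg0 (x := fun N => 2 * abs2 (X f n - \sum_(k < N) f k * X (e k) n))); last first.
  by rewrite -[X in _ --> X](mulr0 2); exact: cvgMl_tmp.
move=> N; set s := \sum_(k < N) _.
have s_le : abs2 s <= hs_norm2 X * vnorm2 f.
  apply: le_trans (cauchy_schwarz f (fun k => X (e k) n) N) _.
  rewrite mulrC ler_pM ?sumr_ge0 //.
  - by move=> k _; exact: abs2_ge0.
  - by move=> k _; exact: abs2_ge0.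
  - apply: le_trans (series_le_hs_norm2 N hX); rewrite /series /= big_mkord.
    by apply: ler_sum => k _; exact: abs2_le_vnorm2 (hs_l2_col k hX).
  - by have := series_le_vnorm2 N lf; rewrite /series /= big_mkord.
rewrite -{1}[X f n](subrK s) addrC; apply: le_trans (abs2D_le _ _) _.
by rewrite lerD2r ler_wpM2l.
Qed.

Lemma hs_lincomb (a : R[i]) X Y : hs X -> hs Y -> hs (fun f k => a * X f k + Y f k).
Proof.
move=> hX hY; have [[X_l2 X_lin _] [Y_l2 Y_lin _]] := (hs_bounded_op hX, hs_bounded_op hY).
have [MX MX_ge0 XM] := bounded_op_norm (hs_bounded_op hX).
have [MY MY_ge0 YM] := bounded_op_norm (hs_bounded_op hY).
have a2_ge0 : 0 <= 2 * abs2 a by rewrite mulr_ge0 ?abs2_ge0.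
suff bZ : bounded_op (fun f k => a * X f k + Y f k).
  have [] // := hs_bounded (B := 2 * abs2 a * hs_norm2 X + 2 * hs_norm2 Y) bZ => N.
  pose sXY k := 2 * abs2 a * vnorm2 (X (e k)) + 2 * vnorm2 (Y (e k)).
  apply: le_trans (_ : series sXY N <= _).
    by apply: ler_sum => k _; exact: (l2_lincomb a (hs_l2_col k hX) (hs_l2_col k hY)).2.
  rewrite /series /sXY /= big_split /= -!mulr_sumr lerD ?ler_wpM2l //; exact: series_le_hs_norm2.
split.
- by move=> f lf; exact: (l2_lincomb a (X_l2 f lf) (Y_l2 f lf)).1.
- by move=> b f g lf lg; rewrite X_lin // Y_lin //; apply: funext => k; ring.
- exists (2 * abs2 a * MX + 2 * MY) => f lf.
  apply: le_trans (l2_lincomb a (X_l2 f lf) (Y_l2 f lf)).2 _.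
  have := ler_wpM2l a2_ge0 (XM f lf); have := ler_wpM2l (ler0n _ 2) (YM f lf); nra.
Qed.

Definition rank1 (c : nat -> R[i]) (J m : nat) : op R :=
  fun f k => (\sum_(i < J) c i * f i) * e m k.

Lemma rank1E c J m : rank1 c J m = (fun f k => \sum_(j < J) c j * eps m j f k).
Proof.
apply: funext => f; apply: funext => k; rewrite /rank1 mulr_suml.
by apply: eq_bigr => j _; rewrite epsE mulrA.
Qed.

Lemma hs_rank1 c J m :
  hs (rank1 c J m) /\ hs_norm2 (rank1 c J m) = series (fun i => abs2 (c i)) J.
Proof.
pose u l := if (l < J)%N then abs2 (c l) else 0.
have col l : vnorm2 (rank1 c J m (e l)) = u l.
  rewrite /rank1 (eq_bigr (fun i : 'I_J => c i * e i l)) => [|i _]; last by rewrite ebasisC.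
  rewrite sum_scale_ebasis (l2_scale_ebasis _ m).2 /u.
  by case: ifP => // _; rewrite abs20.
have u_support l : (J <= l)%N -> u l = 0 by rewrite /u leqNgt => /negbTE ->.
have series_u : series u J = series (fun i => abs2 (c i)) J.
  by apply: eq_big_nat => l /andP[_ lJ]; rewrite /u lJ.
have b1 : bounded_op (rank1 c J m).
  split.
  - by move=> f _; exact: (l2_scale_ebasis _ m).1.
  - move=> a f g lf lg; apply: funext => k; rewrite /rank1.
    rewrite (eq_bigr (fun i : 'I_J => a * (c i * f i) + c i * g i)) => [|i _]; last by ring.
    by rewrite big_split /= -mulr_sumr; ring.
  - exists (series (fun i => abs2 (c i)) J) => f lf.
    rewrite (l2_scale_ebasis _ m).2; apply: le_trans (cauchy_schwarz c f J) _.
    rewrite /series /= !big_mkord ler_wpM2l ?sumr_ge0 // => [i _|]; first exact: abs2_ge0.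
    by have := series_le_vnorm2 J lf; rewrite /series /= big_mkord.
have [h1 _] : hs (rank1 c J m) /\ hs_norm2 (rank1 c J m) <= series u J.
  apply: hs_bounded => // L.
  have -> : series (fun k => vnorm2 (rank1 c J m (e k))) L = series u L.
    by rewrite /series /=; apply: eq_bigr => l _; exact: col.
  have u_ge0 l : 0 <= u l by rewrite /u; case: ifP; rewrite ?abs2_ge0.
  case: (leqP J L) => [/(series_support u_support) -> // | /ltnW].
  by move=> LJ; exact: (nondecreasing_series_ge0 u_ge0 LJ).
split => //; rewrite -series_u -(rsum_support u_support).
by congr (limn _); apply: funext => L; apply: eq_bigr => l _; exact: col.
Qed.

Lemma hs_eps m j : hs (@eps R m j).
Proof.
suff -> : eps m j = rank1 (e j) j.+1 m by exact: (hs_rank1 _ _ _).1.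
apply: funext => f; apply: funext => k; rewrite epsE /rank1; congr (_ * _).
rewrite (eq_bigr (fun i : 'I_j.+1 => f i * e i j)) => [|i _]; last by rewrite mulrC ebasisC.
by rewrite sum_scale_ebasis ltnSn.
Qed.

Lemma hs_zero : hs (fun (_ : vec R) _ => 0).
Proof.
suff -> : (fun (_ : vec R) _ => 0) = rank1 (fun=> 0) 0 0 by exact: (hs_rank1 _ _ _).1.
by apply: funext => f; apply: funext => k; rewrite /rank1 big_ord0 mul0r.
Qed.

Lemma hs_finsum (c : nat -> R[i]) (X : nat -> op R) N : (forall i, hs (X i)) ->
  hs (fun f k => \sum_(i < N) c i * X i f k).
Proof.
move=> hX; elim: N => [|N IH].
  have -> : (fun f k => \sum_(i < 0) c i * X i f k) = (fun (_ : vec R) _ => 0).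
    by apply: funext => f; apply: funext => k; rewrite big_ord0.
  exact: hs_zero.
have -> : (fun f k => \sum_(i < N.+1) c i * X i f k)
          = (fun f k => c N * X N f k + \sum_(i < N) c i * X i f k).
  by apply: funext => f; apply: funext => k; rewrite big_ord_recr /= addrC.
exact: hs_lincomb.
Qed.

End hilbert_schmidt.

Section rows.
Variable R : realType.
Local Notation e := (ebasis R).
Implicit Types (f : vec R) (X : op R).

(* [row_op m X] is the paper's [eps_{mm} X], the [m]-th row of [X]. *)
Definition row_op (m : nat) X : op R := fun f k => X f m * e m k.

Definition rowcut (N : nat) X : op R := fun f => tailn N (X f).

Lemma hs_row_op m X : hs X -> hs (row_op m X) /\ hs_norm2 (row_op m X) <= hs_norm2 X.
Proof.
move=> hX; have [X_l2 X_lin _] := hs_bounded_op hX.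
have [M M_ge0 XM] := bounded_op_norm (hs_bounded_op hX).
apply: hs_bounded => [|N].
  split.
  - by move=> f _; exact: (l2_scale_ebasis _ m).1.
  - by move=> a f g lf lg; rewrite /row_op X_lin //; apply: funext => k; ring.
  - exists M => f lf; rewrite (l2_scale_ebasis _ m).2.
    by apply: le_trans (XM f lf); exact: abs2_le_vnorm2 (X_l2 f lf).
apply: le_trans (series_le_hs_norm2 N hX); apply: ler_sum => k _.
by rewrite (l2_scale_ebasis _ m).2; exact: abs2_le_vnorm2 (hs_l2_col k hX).
Qed.

Lemma hs_rowcut N X : hs X -> hs (rowcut N X).
Proof.
move=> hX; have [X_l2 X_lin [M XM]] := hs_bounded_op hX.
have [] // := hs_bounded (B := hs_norm2 X) (X := rowcut N X).
  split.
  - by move=> f lf; exact: (l2_tailn N (X_l2 f lf)).1.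
  - move=> a f g lf lg; rewrite /rowcut X_lin //; apply: funext => i.
    by rewrite /tailn; case: ifP => _; rewrite ?mulr0 ?addr0.
  - exists M => f lf; apply: le_trans (XM f lf).
    exact: (l2_tailn N (X_l2 f lf)).2.
move=> L; apply: le_trans (series_le_hs_norm2 L hX); apply: ler_sum => k _.
exact: (l2_tailn N (hs_l2_col k hX)).2.
Qed.

Lemma hs_norm2_rowcut_cvg0 X : hs X -> hs_norm2 (rowcut N X) @[N --> \oo] --> 0.
Proof.
move=> hX; apply: (@rsum_cvg0_dominated _ (fun N k => vnorm2 (tailn N (X (e k))))
  (fun k => vnorm2 (X (e k)))) => [N k||k].
- have [l2_tail le_col] := l2_tailn N (hs_l2_col k hX).
  by rewrite (vnorm2_ge0 l2_tail) le_col.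
- exact: hX.2.
- exact: vnorm2_tailn_cvg0 (hs_l2_col k hX).
Qed.

Lemma hs_series_rows X : hs X -> hs_series_to (fun n => row_op n X) X.
Proof.
move=> hX; rewrite /hs_series_to.
have -> : (fun N => hs_norm2 (opsub X (opsum N (fun n => row_op n X))))
          = (fun N => hs_norm2 (rowcut N X)).
  apply: funext => N; congr hs_norm2; apply: funext => f; apply: funext => i.
  rewrite /opsub /opsum /row_op /rowcut /tailn sum_scale_ebasis.
  by case: ifP => _; rewrite ?subrr ?subr0.
exact: hs_norm2_rowcut_cvg0.
Qed.

Lemma row_series_finite X m : hs X -> series_finite (fun l => abs2 (X (e l) m)).
Proof.
move=> hX; have row_ge0 l : 0 <= abs2 (X (e l) m) by exact: abs2_ge0.
have [] // := series_finite_bounded (B := hs_norm2 X) row_ge0 => N.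
apply: le_trans (series_le_hs_norm2 N hX); apply: ler_sum => l _.
exact: abs2_le_vnorm2 (hs_l2_col l hX).
Qed.

End rows.

Section operator_on_S2.
Variable R : realType.
Local Notation e := (ebasis R).
Implicit Types (f : vec R) (X Y eta : op R).

Variable A : op R -> op R.
Hypothesis hs_A : forall X, hs X -> hs (A X).
Hypothesis A_linear : forall (a : R[i]) X Y, hs X -> hs Y ->
  eqS2 (A (fun f k => a * X f k + Y f k)) (fun f k => a * A X f k + A Y f k).
Variable M : R.
Hypothesis M_ge0 : 0 <= M.
Hypothesis A_le : forall X, hs X -> hs_norm2 (A X) <= M * hs_norm2 X.

Lemma A_zero f : l2 f -> A (fun _ _ => 0) f = (fun=> 0).
Proof.
move=> lf; have := A_linear 1 (hs_zero R) (hs_zero R) lf.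
rewrite (_ : (fun g k => 1 * 0 + 0) = fun _ _ => 0); last first.
  by apply: funext => g; apply: funext => k; rewrite mul1r addr0.
move=> A0; apply: funext => k; have := congr1 (fun g => g k) A0; rewrite /= mul1r.
by rewrite -{1}[A _ f k]addr0 => /addrI <-.
Qed.

Lemma A_finsum (c : nat -> R[i]) (X : nat -> op R) N : (forall i, hs (X i)) ->
  eqS2 (A (fun f k => \sum_(i < N) c i * X i f k)) (fun f k => \sum_(i < N) c i * A (X i) f k).
Proof.
move=> hX; elim: N => [|N IH] f lf.
  have -> : (fun f k => \sum_(i < 0) c i * X i f k) = (fun _ _ => 0).
    by apply: funext => g; apply: funext => k; rewrite big_ord0.
  by rewrite A_zero //; apply: funext => k; rewrite big_ord0.
have -> : (fun f k => \sum_(i < N.+1) c i * X i f k)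
          = (fun f k => c N * X N f k + \sum_(i < N) c i * X i f k).
  by apply: funext => g; apply: funext => k; rewrite big_ord_recr /= addrC.
rewrite (A_linear _ (hX N) (hs_finsum _ _ hX)) // (IH f lf).
by apply: funext => k; rewrite big_ord_recr /= addrC.
Qed.

Definition coef_op n m : op R := fun f j => A (eps m j) f n.

Lemma coef_op_entry n m j k :
  dotH (e j) (coef_op n m (e k)) = hs_dot (eps n k) (A (eps m j)).
Proof.
rewrite dotH_ebasis /hs_dot (@csum_single _ _ k) => [|l lk].
  by rewrite epsE dotH_scale_ebasis /ebasis eqxx conjC1 mul1r.
by rewrite epsE dotH_scale_ebasis /ebasis eq_sym (negbTE lk) conjC0 mul0r.
Qed.

(* Testing [A] on [sum_(j < J) conj(x_j) eps_{mj}], where [x_j] are the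
   coordinates of [coef_op n m f], gives [s^2 <= 2 M s |f|^2] for
   [s = sum_(j < J) |x_j|^2]. *)
Lemma series_coef_op_le n m f : l2 f -> forall J,
  series (fun j => abs2 (coef_op n m f j)) J <= 2 * M * vnorm2 f.
Proof.
move=> lf J; set x := coef_op n m f; set s := series _ J.
have s_ge0 : 0 <= s by apply: series_ge0 => j; exact: abs2_ge0.
pose c j := (x j)^*%C.
have [hY hY_norm] := hs_rank1 c J m.
have AY : A (rank1 c J m) f n = s%:C%C.
  rewrite rank1E A_finsum // => [|j]; last exact: hs_eps.
  rewrite /s /series /= big_mkord rmorph_sum; apply: eq_bigr => j _.
  by rewrite /c mulJ_abs2.
have AY_le := abs2_hs_apply_le n (hs_A hY) lf.
rewrite AY abs2_real in AY_le.
have hY_s : hs_norm2 (rank1 c J m) = s.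
  by rewrite hY_norm; apply: eq_bigr => j _; rewrite /c abs2J.
have := A_le hY; rewrite hY_s => A_le_s.
have s2_le : s ^+ 2 <= 2 * M * vnorm2 f * s.
  apply: le_trans AY_le _; have := vnorm2_ge0 lf.
  have := ler_wpM2r (vnorm2_ge0 lf) A_le_s; nra.
have [-> | s_neq0] := eqVneq s 0; first by rewrite !mulr_ge0 ?vnorm2_ge0.
have s_gt0 : 0 < s by rewrite lt_neqAle eq_sym s_neq0 s_ge0.
by rewrite -(ler_pM2r s_gt0) -expr2.
Qed.

Lemma coef_op_bounded n m : bounded_op (coef_op n m).
Proof.
split.
- by move=> f lf; exact: (l2_bounded (series_coef_op_le n m lf)).1.
- move=> a f g lf lg; apply: funext => j.
  by have [_ lin _] := hs_bounded_op (hs_A (hs_eps R m j)); rewrite /coef_op lin.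
- by exists (2 * M) => f lf; exact: (l2_bounded (series_coef_op_le n m lf)).2.
Qed.

Lemma A_rank1_row_cvg eta m n k : hs eta ->
  abs2 (A (row_op m eta) (e k) n - A (rank1 (fun j => eta (e j) m) J m) (e k) n)
    @[J --> \oo] --> 0.
Proof.
move=> heta; set row := fun j => eta (e j) m.
pose D J : op R := fun f i => -1 * rank1 row J m f i + row_op m eta f i.
have hD J : hs (D J).
  by apply: hs_lincomb; [exact: (hs_rank1 _ _ _).1 | exact: (hs_row_op m heta).1].
have D_col J l : D J (e l) = (fun i => tailn J row l * e m i).
  apply: funext => i; rewrite /D /rank1 /row_op /tailn.
  rewrite (eq_bigr (fun j : 'I_J => row j * e j l)) => [|j _]; last by rewrite ebasisC.
  by rewrite sum_scale_ebasis /row; case: ifP => _; ring.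
have hD_norm J : hs_norm2 (D J) = vnorm2 (tailn J row).
  congr (limn _); apply: funext => L; apply: eq_bigr => l _.
  by rewrite D_col (l2_scale_ebasis _ m).2.
apply: (@cvg0_squeeze _ _ (fun J => M * vnorm2 (tailn J row))) => [J|].
  rewrite abs2_ge0 /=.
  have -> : A (row_op m eta) (e k) n - A (rank1 row J m) (e k) n = A (D J) (e k) n.
    rewrite /D (A_linear (-1) (hs_rank1 row J m).1 (hs_row_op m heta).1 (l2_ebasis R k)).
    by rewrite mulN1r addrC.
  apply: le_trans (abs2_entry_le_hs_norm2 k n (hs_A (hD J))) _.
  by rewrite -hD_norm; exact: A_le.
rewrite -[X in _ --> X](mulr0 M); apply: cvgMl_tmp; apply: vnorm2_tailn_cvg0.
exact: row_series_finite.
Qed.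

(* Expanding [eta] at [coef_op n m (e k)] and [A] at the truncated [m]-th rows
   of [eta] produces the same finite sums. *)
Lemma coef_op_row n m k eta : hs eta ->
  eta (coef_op n m (e k)) m = A (row_op m eta) (e k) n.
Proof.
move=> heta; set g := coef_op n m (e k).
have lg : l2 g by case: (coef_op_bounded n m) => a_l2 _ _; exact/a_l2/l2_ebasis.
apply: (abs2_lim_unique (bounded_op_expansion m (hs_bounded_op heta) lg)).
have -> : (fun N => abs2 (A (row_op m eta) (e k) n - \sum_(j < N) g j * eta (e j) m))
    = (fun N => abs2 (A (row_op m eta) (e k) n - A (rank1 (fun j => eta (e j) m) N m) (e k) n)).
  apply: funext => N; congr (abs2 (_ - _)).
  rewrite rank1E (A_finsum (fun j => eta (e j) m) _ (hs_eps R m) (l2_ebasis R k)).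
  by apply: eq_bigr => j _; rewrite mulrC.
exact: A_rank1_row_cvg.
Qed.

Lemma hs_series_coef_op n eta : hs eta ->
  hs_series_to (fun m f => eps n m (eta (coef_op n m f))) (row_op n (A eta)).
Proof.
move=> heta; rewrite /hs_series_to.
pose Q N : op R := fun f i => \sum_(m < N) 1 * row_op m eta f i.
have hQ N : hs (Q N) := hs_finsum (fun=> 1) N (fun m => (hs_row_op m heta).1).
have rowcutE N : rowcut N eta = (fun f i => -1 * Q N f i + eta f i).
  apply: funext => f; apply: funext => i; rewrite /rowcut /Q /row_op /tailn.
  under eq_bigr do rewrite mul1r.
  by rewrite sum_scale_ebasis; case: ifP => _; ring.
have colE N k : opsub (row_op n (A eta)) (opsum N (fun m f => eps n m (eta (coef_op n m f)))) (e k)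
    = row_op n (A (rowcut N eta)) (e k).
  apply: funext => i; rewrite /opsub /opsum /row_op.
  under eq_bigr do rewrite epsE coef_op_row //.
  rewrite rowcutE (A_linear (-1) (hQ N) heta (l2_ebasis R k)) /=.
  rewrite (A_finsum (fun=> 1) N (fun m => (hs_row_op m heta).1) (l2_ebasis R k)) /=.
  under [X in _ = (_ * X + _) * _]eq_bigr do rewrite mul1r.
  by rewrite mulN1r mulrDl mulNr mulr_suml addrC.
apply: (@cvg0_squeeze _ _ (fun N => M * hs_norm2 (rowcut N eta))) => [N|].
  have [h_row h_row_le] := hs_row_op n (hs_A (hs_rowcut N heta)).
  rewrite (eq_hs_norm2 (colE N)) hs_norm2_ge0 //=.
  by apply: le_trans h_row_le _; exact: A_le (hs_rowcut N heta).
rewrite -[X in _ --> X](mulr0 M); apply: cvgMl_tmp; exact: hs_norm2_rowcut_cvg0.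
Qed.

End operator_on_S2.

Theorem lemma3p4 (R : realType) (A : op R -> op R) :
  bounded_S2op A ->
  exists a : nat -> nat -> op R,
    (forall n m, bounded_op (a n m) /\
       forall j k, dotH (ebasis R j) (a n m (ebasis R k))
                   = hs_dot (eps n k) (A (eps m j))) /\
    (forall eta : op R, hs eta ->
       exists S : nat -> op R,
         (forall n, hs (S n) /\
            hs_series_to (fun m => fun f => eps n m (eta (a n m f))) (S n)) /\
         hs_series_to S (A eta)).
Proof.
case=> hs_A _ A_linear [M0 A_le0].
have [M M_ge0 A_le] : exists2 M : R, 0 <= M & forall X, hs X -> hs_norm2 (A X) <= M * hs_norm2 X.
  exists (Num.max M0 0) => [|X hX]; first by rewrite le_max lexx orbT.
  exact: ler_pM_max0 (hs_norm2_ge0 hX) (A_le0 X hX).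
exists (coef_op A); split.
  move=> n m; split; first exact: (coef_op_bounded hs_A A_linear M_ge0 A_le).
  exact: coef_op_entry.
move=> eta heta; have hA_eta := hs_A _ heta.
exists (fun n => row_op n (A eta)); split; last exact: hs_series_rows.
move=> n; split; first exact: (hs_row_op n hA_eta).1.
exact: (hs_series_coef_op hs_A A_linear M_ge0 A_le).
Qed.
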